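(* Let $G$ be a graph, let $\mathcal P$ be a set of pairwise distinguishable $(k+1)$-profiles of $G$ with $k=\kappa(\mathcal P,G)$, and let $(A_1,A_2),(B_1,B_2)\in\mathcal R(k,\mathcal P)$. Then there are two opposite corner separations of $(A_1,A_2)$ and $(B_1,B_2)$ that both lie in $\mathcal R(k,\mathcal P)$.
   Context: A separation of $G$ is an ordered pair $(A,B)$ of subsets of $V(G)$ with $A\cup B=V(G)$ and no edge between $A\setminus B$ and $B\setminus A$; its order is $|A\cap B|$. $(A,B)\le(C,D)$ means $A\subseteq C$, $D\subseteq B$. A profile is a set $P$ of separations with (P1) if $(C,D)\le(A,B)\in P$ then $(D,C)\notin P$, and (P2) if $(A,B),(C,D)\in P$ then $(B\cap D,A\cup C)\notin P$. For $\ell\in\mathbb N$, $P$ is an $\ell$-profile if all its separations have order $<\ell$ and for each separation $(A,B)$ of order $<\ell$, $(A,B)\in P$ or $(B,A)\in P$. A separation $(A,B)$ distinguishes profiles $P,P'$ if $(A,B)\in P,(B,A)\in P'$ or vice versa. $\kappa(\mathcal P,G)$ is the minimum order of a separation distinguishing two profiles of $\mathcal P$. $\mathcal R(k,\mathcal P)$ is the set of separations of finite order at most $k$ distinguishing two profiles of $\mathcal P$. For $\{E,E'\}=\{A_1,A_2\}$, $\{F,F'\}=\{B_1,B_2\}$ the corner separation of $E\cap F$ is $(E\cap F,E'\cup F')$; the corner separations $(E\cap F,E'\cup F')$ and $(E\cup F,E'\cap F')$ are called opposite. *)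

(* Graphs may be infinite: vertex type V arbitrary,
   vertex sets are predicates V -> Prop. *)
From Stdlib Require Import List Arith.
Import ListNotations.

Definition vset (V : Type) := V -> Prop.
Definition sepT (V : Type) := (vset V * vset V)%type.

Definition is_sep {V : Type} (adj : V -> V -> Prop) (s : sepT V) : Prop :=
  (forall x, fst s x \/ snd s x) /\
  (forall x y, adj x y ->
     ~ ((fst s x /\ ~ snd s x /\ snd s y /\ ~ fst s y) \/
        (snd s x /\ ~ fst s x /\ fst s y /\ ~ snd s y))).

Definition order_eq {V : Type} (s : sepT V) (n : nat) : Prop :=
  exists l : list V, NoDup l /\ length l = n /\
    forall x, (fst s x /\ snd s x) <-> In x l.

Definition order_lt {V : Type} (s : sepT V) (n : nat) : Prop :=
  exists m, m < n /\ order_eq s m.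

Definition sep_le {V : Type} (s t : sepT V) : Prop :=
  (forall x, fst s x -> fst t x) /\ (forall x, snd t x -> snd s x).

Definition inv {V : Type} (s : sepT V) : sepT V := (snd s, fst s).

Definition profile {V : Type} (adj : V -> V -> Prop) (P : sepT V -> Prop) : Prop :=
  (forall s, P s -> is_sep adj s) /\
  (forall s t, sep_le t s -> P s -> ~ P (inv t)) /\
  (forall s t, P s -> P t ->
     ~ P ((fun x => snd s x /\ snd t x), (fun x => fst s x \/ fst t x))).

Definition l_profile {V : Type} (adj : V -> V -> Prop) (l : nat)
    (P : sepT V -> Prop) : Prop :=
  profile adj P /\
  (forall s, P s -> order_lt s l) /\
  (forall s, is_sep adj s -> order_lt s l -> P s \/ P (inv s)).

Definition distinguishes {V : Type} (s : sepT V) (P P' : sepT V -> Prop) : Prop :=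
  (P s /\ P' (inv s)) \/ (P (inv s) /\ P' s).

Definition dist_in {V : Type} (fam : (sepT V -> Prop) -> Prop) (s : sepT V) : Prop :=
  exists P P', fam P /\ fam P' /\ distinguishes s P P'.

Definition pairwise_distinguishable {V : Type} (adj : V -> V -> Prop)
    (fam : (sepT V -> Prop) -> Prop) : Prop :=
  forall P P', fam P -> fam P' -> P <> P' ->
    exists s, is_sep adj s /\ distinguishes s P P'.

Definition is_kappa {V : Type} (adj : V -> V -> Prop)
    (fam : (sepT V -> Prop) -> Prop) (k : nat) : Prop :=
  (exists s, is_sep adj s /\ order_eq s k /\ dist_in fam s) /\
  (forall s m, is_sep adj s -> order_eq s m -> dist_in fam s -> k <= m).

Definition R_set {V : Type} (adj : V -> V -> Prop) (k : nat)
    (fam : (sepT V -> Prop) -> Prop) (s : sepT V) : Prop :=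
  is_sep adj s /\ (exists m, m <= k /\ order_eq s m) /\ dist_in fam s.

Definition sI {V : Type} (X Y : vset V) : vset V := fun x => X x /\ Y x.
Definition sU {V : Type} (X Y : vset V) : vset V := fun x => X x \/ Y x.

(* Every profile of the family orients (A1,A2) and (B1,B2), and each of them is oriented both
   ways by some profile; so two profiles R1, R2 orient both separations oppositely.  Name the
   separations (E,E') and (F,F') so that R2 contains them and R1 their inverses.  The corner
   (E∩F, E'∪F') and its opposite corner (E∪F, E'∩F') have orders summing to
   |E∩E'| + |F∩F'| <= 2k.  The profile axioms force each of these corners, if of order at most k,
   to be distinguished by R1 and R2, hence to have order at least k = κ.  So neither corner has
   order above k, for then the other would have order below k. *)

From Stdlib Require Import List Arith Lia ClassicalEpsilon.

Definition asbool (P : Prop) : bool :=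
  if excluded_middle_informative P then true else false.

Lemma asboolE (P : Prop) : asbool P = true <-> P.
Proof.
  unfold asbool; destruct (excluded_middle_informative P); split; easy.
Qed.

Section Cardinality.
Context {V : Type}.

Definition card_eq (X : vset V) (n : nat) : Prop :=
  exists l : list V, NoDup l /\ length l = n /\ forall x, X x <-> In x l.

Lemma card_eq_ext (X Y : vset V) n :
  (forall x, X x <-> Y x) -> card_eq X n -> card_eq Y n.
Proof.
  intros XY [l [nd [len mem]]]; exists l; repeat split; auto.
  - now intros Hy; apply mem, XY.
  - now intros Hl; apply XY, mem.
Qed.

Lemma card_eq_unique (X : vset V) n m : card_eq X n -> card_eq X m -> n = m.
Proof.
  intros [l [nd [<- mem]]] [l' [nd' [<- mem']]].
  apply Nat.le_antisymm; apply NoDup_incl_length; auto; intros x Hx.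
  - now apply mem', mem.
  - now apply mem, mem'.
Qed.

Lemma card_eq_sub (X Y : vset V) n :
  card_eq X n -> (forall x, Y x -> X x) -> exists m, card_eq Y m.
Proof.
  intros [l [nd [_ mem]]] YX.
  exists (length (filter (fun x => asbool (Y x)) l)), (filter (fun x => asbool (Y x)) l).
  repeat split; [now apply NoDup_filter | |]; intros Hx.
  - apply filter_In; split; [now apply mem, YX | now apply asboolE].
  - apply filter_In, proj2 in Hx; now apply asboolE.
Qed.

Lemma card_eq_inter_union (X Y : vset V) a b :
  card_eq X a -> card_eq Y b ->
  exists i u, card_eq (sI X Y) i /\ card_eq (sU X Y) u /\ i + u = a + b.
Proof.
  intros [lX [ndX [lenX memX]]] [lY [ndY [lenY memY]]].
  set (inY := fun x => asbool (In x lY)).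
  set (lI := filter inY lX).
  set (lD := filter (fun x => negb (inY x)) lX).
  exists (length lI), (length (lD ++ lY)); split; [|split].
  - exists lI; split; [now apply NoDup_filter | split; [reflexivity | intros x; split; intros Hx]].
    + apply filter_In; split; [now apply memX, Hx | now apply (proj2 (asboolE _)), memY, Hx].
    + apply filter_In in Hx as [HxX HxY]; apply (proj1 (asboolE _)) in HxY.
      split; [now apply memX | now apply memY].
  - exists (lD ++ lY); split; [| split; [reflexivity | intros x; split; intros Hx]].
    + apply NoDup_app; [now apply NoDup_filter | exact ndY |].
      intros x Hx HxY; apply filter_In, proj2 in Hx.
      unfold inY in Hx; rewrite (proj2 (asboolE _) HxY) in Hx; discriminate.
    + apply in_app_iff.
      destruct (excluded_middle_informative (In x lY)) as [HxY | HxY]; [now right|].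
      left; apply filter_In; split.
      * destruct Hx as [Hx | Hx]; [now apply memX | now apply memY in Hx].
      * unfold inY; destruct (asbool (In x lY)) eqn:E; [|easy].
        now apply (proj1 (asboolE _)) in E.
    + apply in_app_iff in Hx as [Hx | Hx].
      * now left; apply filter_In in Hx as [Hx _]; apply memX.
      * now right; apply memY.
  - unfold lI, lD; rewrite length_app, <- lenX, <- lenY, <- (filter_length inY lX); lia.
Qed.

(* Modularity: |P| + |Q| = |P ∩ Q| + |P ∪ Q| = |X ∩ Y| + |X ∪ Y| = |X| + |Y|. *)
Lemma card_eq_modular (P Q X Y : vset V) m1 m2 a b :
  (forall x, sI P Q x <-> sI X Y x) -> (forall x, sU P Q x <-> sU X Y x) ->
  card_eq P m1 -> card_eq Q m2 -> card_eq X a -> card_eq Y b -> m1 + m2 = a + b.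
Proof.
  intros eqI eqU cP cQ cX cY.
  destruct (card_eq_inter_union P Q m1 m2 cP cQ) as [i [u [cI [cU sumPQ]]]].
  destruct (card_eq_inter_union X Y a b cX cY) as [i' [u' [cI' [cU' sumXY]]]].
  apply (card_eq_ext _ _ _ eqI) in cI; apply (card_eq_ext _ _ _ eqU) in cU.
  rewrite <- sumPQ, <- sumXY.
  now rewrite (card_eq_unique _ _ _ cI cI'), (card_eq_unique _ _ _ cU cU').
Qed.

End Cardinality.

Section Separations.
Context {V : Type}.
Implicit Types (s t : sepT V) (adj : V -> V -> Prop).

(* The corner opposite to [corner s t] is [inv (corner (inv s) (inv t))]. *)
Definition corner s t : sepT V := (sI (fst s) (fst t), sU (snd s) (snd t)).

Lemma inv_inv s : inv (inv s) = s.
Proof. now destruct s. Qed.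

Lemma is_sep_inv adj s : is_sep adj s -> is_sep adj (inv s).
Proof.
  destruct s as [X Y]; intros [cover noedge]; split; simpl.
  - now intros x; destruct (cover x); [right | left].
  - intros x y Hxy; specialize (noedge x y Hxy); simpl in noedge; tauto.
Qed.

Lemma is_sep_corner adj s t :
  is_sep adj s -> is_sep adj t -> is_sep adj (corner s t).
Proof.
  destruct s as [E E'], t as [F F']; unfold corner, sI, sU; simpl.
  intros [coverE noedgeE] [coverF noedgeF]; split; simpl in *.
  - intros x; destruct (coverE x), (coverF x); tauto.
  - intros x y Hxy; specialize (noedgeE x y Hxy); specialize (noedgeF x y Hxy).
    destruct (coverE x), (coverF x), (coverE y), (coverF y); tauto.
Qed.

Lemma order_eq_inv s n : order_eq s n -> order_eq (inv s) n.
Proof.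
  intros [l [nd [len mem]]]; exists l; split; [exact nd | split; [exact len |]].
  intros x; rewrite <- mem; simpl; tauto.
Qed.

Definition orient (b : bool) (X1 X2 : vset V) : sepT V :=
  if b then (X1, X2) else (X2, X1).

Lemma inv_orient b (X1 X2 : vset V) : inv (orient b X1 X2) = orient (negb b) X1 X2.
Proof. now destruct b. Qed.

Lemma corner_le s t : sep_le (corner s t) s.
Proof. split; simpl; unfold sI, sU; tauto. Qed.

Lemma order_corners_sum s t a b :
  (forall x, fst s x \/ snd s x) -> (forall x, fst t x \/ snd t x) ->
  order_eq s a -> order_eq t b ->
  exists m1 m2, order_eq (corner s t) m1 /\
    order_eq (corner (inv s) (inv t)) m2 /\ m1 + m2 = a + b.
Proof.
  destruct s as [E E'], t as [F F']; simpl; intros coverE coverF oA oB.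
  change (card_eq (sI E E') a) in oA; change (card_eq (sI F F') b) in oB.
  destruct (card_eq_inter_union _ _ a b oA oB) as [_ [u [_ [cU _]]]].
  assert (sub : forall P : vset V, (forall x, P x -> sU (sI E E') (sI F F') x) ->
                  exists m, card_eq P m)
    by (intros P HP; exact (card_eq_sub _ _ u cU HP)).
  destruct (sub (sI (sI E F) (sU E' F'))) as [m1 c1]; [unfold sI, sU; tauto|].
  destruct (sub (sI (sI E' F') (sU E F))) as [m2 c2]; [unfold sI, sU; tauto|].
  exists m1, m2; split; [exact c1 | split; [exact c2 |]].
  apply (card_eq_modular (sI (sI E F) (sU E' F')) (sI (sI E' F') (sU E F))
           (sI E E') (sI F F')); auto; intros x;
    unfold sI, sU; destruct (coverE x), (coverF x); tauto.
Qed.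

End Separations.

Section Profiles.
Context {V : Type} (adj : V -> V -> Prop).
Implicit Types (s t : sepT V) (P : sepT V -> Prop).

Lemma profile_excludes_corner_of_inverses P s t :
  profile adj P -> P s -> P t -> ~ P (corner (inv s) (inv t)).
Proof. intros [_ [_ P2]]; exact (P2 s t). Qed.

Lemma profile_excludes_inv_corner P s t :
  profile adj P -> P s -> ~ P (inv (corner s t)).
Proof. intros [_ [P1 _]] Ps; exact (P1 s _ (corner_le s t) Ps). Qed.

Lemma dist_in_inv (fam : (sepT V -> Prop) -> Prop) s :
  dist_in fam s -> dist_in fam (inv s).
Proof.
  intros [P [P' [fP [fP' d]]]]; exists P, P'; split; [exact fP | split; [exact fP' |]].
  unfold distinguishes in *; rewrite inv_inv; tauto.
Qed.

Lemma R_set_inv k fam s : R_set adj k fam s -> R_set adj k fam (inv s).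
Proof.
  intros [sep [[m [le ord]] d]]; split; [|split].
  - now apply is_sep_inv.
  - exists m; split; [exact le | now apply order_eq_inv].
  - now apply dist_in_inv.
Qed.

Lemma R_set_orient k fam b (X1 X2 : vset V) :
  R_set adj k fam (X1, X2) -> R_set adj k fam (orient b X1 X2).
Proof. destruct b; [easy | exact (R_set_inv k fam (X1, X2))]. Qed.

Lemma R_set_orientation_realized k fam (X1 X2 : vset V) b :
  R_set adj k fam (X1, X2) -> exists R, fam R /\ R (orient b X1 X2).
Proof.
  intros [_ [_ [P [P' [fP [fP' d]]]]]].
  destruct b, d as [[] | []]; eauto.
Qed.

Lemma R_set_oriented_by_profile k fam (X1 X2 : vset V) R :
  (forall P, fam P -> l_profile adj (S k) P) -> R_set adj k fam (X1, X2) ->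
  fam R -> R (orient true X1 X2) \/ R (orient false X1 X2).
Proof.
  intros profs [sep [[m [le ord]] _]] fR.
  destruct (profs R fR) as [_ [_ orients]].
  apply (orients (X1, X2) sep); exists m; split; [lia | exact ord].
Qed.

Section OppositeProfiles.
Variables (fam : (sepT V -> Prop) -> Prop) (k : nat).
Hypothesis fam_profiles : forall P, fam P -> l_profile adj (S k) P.
Variables (R1 R2 : sepT V -> Prop) (s t : sepT V).
Hypotheses (famR1 : fam R1) (famR2 : fam R2).
Hypotheses (R1s : R1 (inv s)) (R1t : R1 (inv t)) (R2s : R2 s).

Lemma corner_distinguished m :
  is_sep adj (corner s t) -> order_eq (corner s t) m -> m <= k ->
  dist_in fam (corner s t).
Proof.
  intros sep ord le.
  assert (small : order_lt (corner s t) (S k)) by (exists m; split; [lia | exact ord]).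
  destruct (fam_profiles R1 famR1) as [prof1 [_ orient1]].
  destruct (fam_profiles R2 famR2) as [prof2 [_ orient2]].
  assert (R1_not_corner : ~ R1 (corner s t)).
  { rewrite <- (inv_inv s), <- (inv_inv t) at 1.
    exact (profile_excludes_corner_of_inverses R1 _ _ prof1 R1s R1t). }
  assert (R2_not_inv_corner : ~ R2 (inv (corner s t)))
    by exact (profile_excludes_inv_corner R2 s t prof2 R2s).
  exists R1, R2; split; [exact famR1 | split; [exact famR2 | right; split]].
  - now destruct (orient1 _ sep small).
  - now destruct (orient2 _ sep small).
Qed.

End OppositeProfiles.

Lemma opposite_corners_in_R fam k (R1 R2 : sepT V -> Prop) s t :
  (forall P, fam P -> l_profile adj (S k) P) -> is_kappa adj fam k ->
  fam R1 -> fam R2 -> R1 (inv s) -> R1 (inv t) -> R2 s -> R2 t ->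
  is_sep adj s -> is_sep adj t ->
  (exists a, a <= k /\ order_eq s a) -> (exists b, b <= k /\ order_eq t b) ->
  R_set adj k fam (corner s t) /\ R_set adj k fam (inv (corner (inv s) (inv t))).
Proof.
  intros profs [_ kappa_min] famR1 famR2 R1s R1t R2s R2t seps sept
    [a [le_a ord_s]] [b [le_b ord_t]].
  destruct (order_corners_sum s t a b (proj1 seps) (proj1 sept) ord_s ord_t)
    as [m1 [m2 [ord1 [ord2 sum]]]].
  assert (sep1 : is_sep adj (corner s t)) by now apply is_sep_corner.
  assert (sep2 : is_sep adj (corner (inv s) (inv t)))
    by now apply is_sep_corner; apply is_sep_inv.
  assert (dist1 : m1 <= k -> dist_in fam (corner s t))
    by exact (corner_distinguished fam k profs R1 R2 s t famR1 famR2 R1s R1t R2s m1 sep1 ord1).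
  assert (dist2 : m2 <= k -> dist_in fam (corner (inv s) (inv t))).
  { rewrite <- (inv_inv s) in R2s; rewrite <- (inv_inv t) in R2t.
    exact (corner_distinguished fam k profs R2 R1 (inv s) (inv t)
             famR2 famR1 R2s R2t R1s m2 sep2 ord2). }
  assert (bounds : m1 <= k /\ m2 <= k).
  { destruct (Nat.le_gt_cases m1 k), (Nat.le_gt_cases m2 k); try lia.
    - specialize (kappa_min _ _ sep1 ord1 (dist1 ltac:(lia))); lia.
    - specialize (kappa_min _ _ sep2 ord2 (dist2 ltac:(lia))); lia. }
  destruct bounds as [le1 le2]; split; [| apply R_set_inv].
  - split; [exact sep1 | split; [now exists m1 | now apply dist1]].
  - split; [exact sep2 | split; [now exists m2 | now apply dist2]].
Qed.

End Profiles.

Lemma exists_antipodal_pair {T : Type} (fam : T -> Prop) (p q : bool -> T -> Prop) :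
  (forall R, fam R -> p true R \/ p false R) ->
  (forall R, fam R -> q true R \/ q false R) ->
  (forall b, exists R, fam R /\ p b R) -> (forall c, exists R, fam R /\ q c R) ->
  exists b c R1 R2, fam R1 /\ fam R2 /\
    p (negb b) R1 /\ q (negb c) R1 /\ p b R2 /\ q c R2.
Proof.
  intros p_total q_total p_onto q_onto.
  destruct (p_onto true) as [Rt [fRt pRt]], (p_onto false) as [Rf [fRf pRf]].
  destruct (q_total Rt fRt) as [qRt | qRt], (q_total Rf fRf) as [qRf | qRf].
  - destruct (q_onto false) as [S [fS qS]].
    destruct (p_total S fS) as [pS | pS].
    + now exists false, true, S, Rf.
    + now exists false, false, Rt, S.
  - now exists false, false, Rt, Rf.
  - now exists false, true, Rt, Rf.
  - destruct (q_onto true) as [S [fS qS]].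
    destruct (p_total S fS) as [pS | pS].
    + now exists false, false, S, Rf.
    + now exists false, true, Rt, S.
Qed.

(* [Hdist] is unused: the profiles witnessing (A1,A2), (B1,B2) ∈ R(k,P) suffice. *)
Theorem lemma2p6 (V : Type) (adj : V -> V -> Prop)
  (fam : (sepT V -> Prop) -> Prop) (k : nat)
  (Hprof : forall P, fam P -> l_profile adj (S k) P)
  (Hdist : pairwise_distinguishable adj fam)
  (Hk : is_kappa adj fam k)
  (A1 A2 B1 B2 : vset V)
  (HA : R_set adj k fam (A1, A2))
  (HB : R_set adj k fam (B1, B2)) :
  exists (b c : bool),
    let E  := if b then A1 else A2 in
    let E' := if b then A2 else A1 in
    let F  := if c then B1 else B2 in
    let F' := if c then B2 else B1 in
    R_set adj k fam (sI E F, sU E' F') /\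
    R_set adj k fam (sU E F, sI E' F').
Proof.
  destruct (exists_antipodal_pair fam (fun b R => R (orient b A1 A2))
              (fun c R => R (orient c B1 B2)))
    as [b [c [R1 [R2 [fR1 [fR2 [R1s [R1t [R2s R2t]]]]]]]]].
  - intros R fR; exact (R_set_oriented_by_profile adj k fam A1 A2 R Hprof HA fR).
  - intros R fR; exact (R_set_oriented_by_profile adj k fam B1 B2 R Hprof HB fR).
  - intros b; exact (R_set_orientation_realized adj k fam A1 A2 b HA).
  - intros c; exact (R_set_orientation_realized adj k fam B1 B2 c HB).
  - rewrite <- inv_orient in R1s, R1t.
    destruct (R_set_orient adj k fam b A1 A2 HA) as [sepA [ordA _]].
    destruct (R_set_orient adj k fam c B1 B2 HB) as [sepB [ordB _]].
    exists b, c.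
    destruct (opposite_corners_in_R adj fam k R1 R2 (orient b A1 A2) (orient c B1 B2)
                Hprof Hk fR1 fR2 R1s R1t R2s R2t sepA sepB ordA ordB).
    destruct b, c; split; assumption.
Qed.
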